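(* Let $(x_n)_{n \in \mathbb{N}}$ be a sequence in $[0,1)$ with the following property: there exist $s \in \mathbb{N}$ and positive real numbers $K$ and $\gamma$ such that for infinitely many $N$ the point set $x_1, \ldots, x_N$ has a subset $x_{j_1}, \ldots, x_{j_M}$ with $M \geq \gamma N$ elements which is contained in some finite set of points of $[0,1)$ of cardinality at most $KN$ having at most $s$ different distances between neighbouring elements (gaps). Then $(x_n)_{n \in \mathbb{N}}$ does not have Poissonian pair correlations.
   Context: For real $x$, $\|x\|$ denotes the distance from $x$ to the nearest integer. A sequence $(x_n)_{n\in\mathbb{N}}$ in $[0,1)$ has Poissonian pair correlations if for every $s \geq 0$, $$F_N(s) := \frac{1}{N}\#\left\{1 \leq l \neq m \leq N : \|x_l - x_m\| \leq \frac{s}{N}\right\} \to 2s \quad (N\to\infty).$$ For a finite point set in $[0,1)$, the gaps are the distances between neighbouring elements, i.e. between consecutive points when the set is arranged in increasing order. *)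

From HB Require Import structures.
From mathcomp Require Import all_boot all_order all_algebra.
From mathcomp Require Import all_classical all_reals topology normedtype sequences.
Set Implicit Arguments. Unset Strict Implicit. Unset Printing Implicit Defensive.
Import Order.TTheory GRing.Theory Num.Theory numFieldNormedType.Exports.
Local Open Scope ring_scope.
Local Open Scope classical_set_scope.
Local Open Scope ring_scope.

Definition dist_int {R : realType} (y : R) : R :=
  Num.min (y - (Num.floor y)%:~R) ((Num.ceil y)%:~R - y).

(* F_N(s) = (1/N) #{ 1 <= l <> m <= N : ||x_l - x_m|| <= s/N };
   the sequence is x_1, x_2, ... and index i : 'I_N stands for i+1. *)
Definition pair_corr {R : realType} (x : nat -> R) (s : R) (N : nat) : R :=
  (#|[set p : 'I_N * 'I_N |
       (p.1 != p.2) && (dist_int (x p.1.+1 - x p.2.+1) <= s / N%:R)]|)%:R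
  / N%:R.

Definition poissonian_pc {R : realType} (x : nat -> R) : Prop :=
  forall s : R, 0 <= s -> (pair_corr x s) @ \oo --> (2 * s : R)%R.

Definition is_gap {R : realType} (P : seq R) (d : R) : Prop :=
  exists p q, [/\ p \in P, q \in P, p < q, d = q - p &
                  forall r, r \in P -> ~ (p < r /\ r < q)].

Definition at_most_gaps {R : realType} (P : seq R) (s : nat) : Prop :=
  exists G : seq R, (size G <= s)%N /\ forall d, is_gap P d -> d \in G.

(** If the pair correlations were Poissonian, the number of ordered pairs
    [l <> m] with [N * ||x_l - x_m||] in a window of length [eta] would be
    about [2 eta N]; so, for large [N], the pairs whose distance is one of [C]
    given values below [T / N] number at most [N / 2].
    Conversely, give each point [y] of the set [P] of the hypothesis the
    weight [y + rank(y) / (K N)] in [[0, 2)] and cut [[0, 2)] into about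
    [2 N / t^2] boxes of length [t^2 / N].  Two points of [J] in the same box
    are less than [t^2 / N] apart and separated by fewer than [t^2 K] points
    of [P], so their distance is a sum of at most [H = t^2 K] gaps, i.e. one
    of at most [(s + 1)^H] values; by Cauchy-Schwarz there are at least
    [(2 t - 1) #|J| - 2 N - t^2] such pairs.  For [t = 2 / gamma + 1] and
    [#|J| >= gamma N] the two bounds are incompatible. *)

From HB Require Import structures.
From mathcomp Require Import zify ring lra.
From mathcomp Require Import all_boot all_order all_algebra.
From mathcomp Require Import all_classical all_reals topology normedtype sequences.
Import Order.TTheory GRing.Theory Num.Theory numFieldNormedType.Exports.
Set Implicit Arguments.
Unset Strict Implicit.
Unset Printing Implicit Defensive.

Local Open Scope ring_scope.

Lemma dist_lt_of_eq_truncn {R : realType} (u v delta : R) :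
  0 < delta -> 0 <= u -> 0 <= v ->
  Num.truncn (u / delta) = Num.truncn (v / delta) -> `|u - v| < delta.
Proof.
move=> delta_gt0 u_ge0 v_ge0 eq_trunc.
have /andP[lo_u hi_u] := truncn_itv (divr_ge0 u_ge0 (ltW delta_gt0)).
have /andP[lo_v hi_v] := truncn_itv (divr_ge0 v_ge0 (ltW delta_gt0)).
move: lo_u hi_u; rewrite eq_trunc -!natr1 => lo_u hi_u; rewrite -natr1 in hi_v.
have : `|u / delta - v / delta| < 1 by rewrite ltr_norml; lra.
by rewrite -mulrBl normrM [`|delta^-1|]gtr0_norm ?invr_gt0 // ltr_pdivrMr // mul1r.
Qed.

Lemma abs_ceil_itv {R : realType} (v : R) :
  0 <= v -> (`|Num.ceil v|%N)%:R - 1 < v <= (`|Num.ceil v|%N)%:R.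
Proof.
move=> v_ge0; rewrite natr_absz ger0_norm ?ceil_ge0; last lra.
by have := ceil_itv v; rewrite rmorphB.
Qed.

Lemma card_le_sum_cover (T : finType) (I : eqType) (S : {set T}) (D : seq I)
    (F : I -> {set T}) :
  (forall p, p \in S -> exists2 d, d \in D & p \in F d) ->
  (#|S| <= \sum_(d <- D) #|F d|)%N.
Proof.
elim: D S => [|d D IH] S cover.
  rewrite big_nil leqn0 cards_eq0; apply/eqP/setP => p; rewrite inE.
  by apply/negP => /cover[].
rewrite big_cons -(cardsID (F d) S) leq_add ?subset_leq_card ?subsetIr //.
apply: IH => p; rewrite inE => /andP[pFd /cover[e]].
rewrite inE => /predU1P[-> pFe|eD pFe]; last by exists e.
by rewrite pFe in pFd.
Qed.

Lemma card_offdiag_same_key_ge {R : realType} (T K : finType) (J : {set T})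
    (key : T -> K) (t : R) :
  (2 * t - 1) * #|J|%:R - t ^+ 2 * #|K|%:R <=
  #|[set p : T * T | [&& p.1 \in J, p.2 \in J, p.1 != p.2 & key p.1 == key p.2]]|%:R.
Proof.
pose B k := [set i in J | key i == k].
pose A := [set p : T * T | [&& p.1 \in J, p.2 \in J & key p.1 == key p.2]].
have sumB : (\sum_k #|B k|)%N = #|J|.
  rewrite -sum1_card (partition_big key predT) //=; apply: eq_bigr => k _.
  by rewrite -sum1_card; apply: eq_bigl => i; rewrite inE.
have cardA : #|A| = (\sum_k #|B k| * #|B k|)%N.
  transitivity (\sum_(i in J) #|B (key i)|)%N.
    rewrite -sum1_card; under [RHS]eq_bigr do rewrite -sum1_card.
    by rewrite pair_big_dep; apply: eq_bigl => -[i j]; rewrite !inE /= (eq_sym (key j)).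
  rewrite (partition_big key predT) //=; apply: eq_bigr => k _.
  rewrite -sum_nat_const; apply: eq_big => [i|i /andP[_ /eqP ->]] //.
  by rewrite inE.
pose S := [set p : T * T | [&& p.1 \in J, p.2 \in J, p.1 != p.2 & key p.1 == key p.2]].
have diag : (#|A| <= #|S| + #|J|)%N.
  have sub : A \subset S :|: [set (i, i) | i in J].
    apply/fintype.subsetP => -[i j]; rewrite !inE /= => /and3P[iJ jJ kij].
    have [<-|nij] := eqVneq i j; first by rewrite imset_f ?orbT.
    by rewrite iJ jJ kij.
  apply: leq_trans (subset_leq_card sub) _; apply: leq_trans (leq_card_setU _ _).1 _.
  by rewrite leq_add2l leq_imset_card.
apply: le_trans (_ : #|A|%:R - #|J|%:R <= _); last first.
  by rewrite lerBlDr -natrD ler_nat.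
have : 2 * t * #|J|%:R - t ^+ 2 * #|K|%:R <= #|A|%:R :> R.
  rewrite cardA -sumB !natr_sum mulr_sumr.
  have -> : t ^+ 2 * #|K|%:R = \sum_(k : K) t ^+ 2 by rewrite sumr_const mulr_natr.
  rewrite -sumrB; apply: ler_sum => k _; rewrite natrM.
  by have := sqr_ge0 (#|B k|%:R - t); rewrite expr2; nra.
lra.
Qed.

Section GapSums.
Context {R : realType}.
Implicit Types (P G : seq R) (a b c y : R).

Fixpoint sums_upto G (h : nat) : seq R :=
  if h is h'.+1 then sums_upto G h' ++ [seq d + e | d <- G, e <- sums_upto G h']
  else [:: 0].

Lemma size_sums_upto G h : size (sums_upto G h) = ((size G).+1 ^ h)%N.
Proof. by elim: h => [|h IH] //=; rewrite size_cat size_allpairs IH expnS mulSn. Qed.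

Lemma sums_upto_subS G h : {subset sums_upto G h <= sums_upto G h.+1}.
Proof. by move=> d dS /=; rewrite mem_cat dS. Qed.

Lemma mem0_sums_upto G h : 0 \in sums_upto G h.
Proof. by elim: h => [|h IH]; [exact: mem_head | exact: sums_upto_subS]. Qed.

Lemma sums_upto_addl G h d e :
  d \in G -> e \in sums_upto G h -> d + e \in sums_upto G h.+1.
Proof. by move=> dG eS /=; rewrite mem_cat allpairs_f ?orbT. Qed.

Definition rank P y : nat := count (< y) P.

Lemma rank_le P a b : a <= b -> (rank P a <= rank P b)%N.
Proof. by move=> leab; apply: sub_count => p /= /lt_le_trans; apply. Qed.

Lemma rank_lt P a b : a \in P -> a < b -> (rank P a < rank P b)%N.
Proof.
move=> aP ltab; apply: (@leq_trans (count (<= a) P)); first by rewrite count_lt_le_mem.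
by apply: sub_count => p /= /le_lt_trans; apply.
Qed.

Lemma gap_sum_of_rank P G (hG : forall d, is_gap P d -> d \in G) h a b :
  a \in P -> b \in P -> a <= b -> (rank P b <= rank P a + h)%N ->
  b - a \in sums_upto G h.
Proof.
elim: h a => [|h IH] a aP bP leab hr;
  have [<-|neab] := eqVneq a b; rewrite ?subrr ?mem0_sums_upto //;
  have ltab : a < b by rewrite lt_neqAle neab.
  by move: hr; rewrite addn0 leqNgt rank_lt.
pose c := \big[Order.min/b]_(p <- P | a < p) p.
have [cP ltac] : c \in P /\ a < c.
  rewrite /c big_seq_cond; apply: (big_ind (fun c => c \in P /\ a < c)) => //.
    by move=> u v [uP au] [vP av]; rewrite /Order.min; case: ifP.
  by move=> p /andP[].
have lecb : c <= b by exact: bigmin_le_id.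
have cmin p : p \in P -> a < p -> c <= p by move=> pP ap; exact: ge_bigmin_seq pP ap.
have gapc : is_gap P (c - a).
  exists a, c; split=> // r rP [ar rc].
  by move: (cmin r rP ar); rewrite leNgt rc.
have -> : b - a = (c - a) + (b - c) by ring.
apply: sums_upto_addl; first exact: hG.
apply: IH => //; have := rank_lt aP ltac; lia.
Qed.

Definition weight P (c y : R) : R := y + (rank P y)%:R / c.

Lemma weight_itv P (c y : R) :
  0 < c -> (size P)%:R <= c -> 0 <= y < 1 -> 0 <= weight P c y < 2.
Proof.
move=> c_gt0 size_P /andP[y_ge0 y_lt1].
have : (rank P y)%:R <= 1 * c by rewrite mul1r (le_trans _ size_P) // ler_nat count_size.
rewrite -ler_pdivrMr // => rank_le1.
have : 0 <= (rank P y)%:R / c by rewrite divr_ge0 // ltW.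
by rewrite /weight; lra.
Qed.

Lemma gap_sum_of_close_weights P G (hG : forall d, is_gap P d -> d \in G)
    (c delta : R) (h : nat) a b :
  0 < c -> delta * c <= h%:R -> a \in P -> b \in P ->
  `|weight P c a - weight P c b| < delta ->
  `|a - b| < delta /\ `|a - b| \in sums_upto G h.
Proof.
move=> c_gt0 le_h; wlog leab : a b / a <= b.
  move=> wlog_ab aP bP; have [/wlog_ab|/ltW leba] := leP a b; first exact.
  by rewrite distrC (distrC a); exact: wlog_ab.
move=> aP bP; rewrite distrC (distrC a) [`|b - a|]ger0_norm ?subr_ge0 //.
have le_rank := rank_le P leab.
have dw : weight P c b - weight P c a = (b - a) + ((rank P b)%:R - (rank P a)%:R) / c.
  by rewrite /weight; ring.
have dr_ge0 : 0 <= ((rank P b)%:R - (rank P a)%:R) / c.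
  by rewrite divr_ge0 ?subr_ge0 ?ler_nat // ltW.
rewrite dw ger0_norm; last by rewrite addr_ge0 // subr_ge0.
move=> lt_delta; split; first lra.
apply: (gap_sum_of_rank hG) => //.
have : (rank P b)%:R - (rank P a)%:R < delta * c :> R by rewrite -ltr_pdivrMr //; lra.
rewrite -natrB // => /lt_le_trans /(_ le_h); rewrite ltr_nat => lt_h.
by rewrite -leq_subLR; apply: ltnW.
Qed.

End GapSums.

Section DistInt.
Context {R : realType}.

Lemma dist_int_ge0 (y : R) : 0 <= dist_int y.
Proof. by rewrite /dist_int le_min subr_ge0 floor_le /= subr_ge0 ceil_ge. Qed.

Lemma dist_intN (y : R) : dist_int (- y) = dist_int y.
Proof.
rewrite /dist_int (floorNceil (- y)) (ceilNfloor (- y)) !opprK !mulrNz minC.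
by congr Num.min; ring.
Qed.

Lemma dist_int_small (y : R) : `|y| <= 1 / 2 -> dist_int y = `|y|.
Proof.
wlog y_ge0 : y / 0 <= y.
  move=> wlog_y; have [/wlog_y//|/ltW y_le0] := leP 0 y.
  by rewrite -dist_intN -normrN; apply: wlog_y; rewrite oppr_ge0.
rewrite ger0_norm // => y_small.
have fl : Num.floor y = 0 by apply: floor_def; rewrite add0r /=; lra.
rewrite /dist_int fl subr0; apply/min_idPl.
have [->|y_gt0] := eqVneq y 0; first by rewrite ceil0 subr0.
have -> : Num.ceil y = 1 by apply: ceil_def; rewrite subrr /=; lra.
rewrite /=; lra.
Qed.

End DistInt.

Section PairCorrelation.
Context {R : realType} (x : nat -> R).

Definition close_pairs (N : nat) (u : R) : {set 'I_N * 'I_N} :=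
  [set p : 'I_N * 'I_N | (p.1 != p.2) && (dist_int (x p.1.+1 - x p.2.+1) <= u / N%:R)].

Definition pairs_at_dist (N : nat) (D : seq R) : {set 'I_N * 'I_N} :=
  [set p : 'I_N * 'I_N | (p.1 != p.2) && (dist_int (x p.1.+1 - x p.2.+1) \in D)].

Lemma pair_corrE u N : pair_corr x u N = #|close_pairs N u|%:R / N%:R.
Proof.
rewrite /pair_corr; congr (_%:R / _); apply: eq_card => p.
by rewrite inE; apply/idP/idP; rewrite in_setE.
Qed.

Lemma close_pairsS N u v : u <= v -> close_pairs N u \subset close_pairs N v.
Proof.
move=> le_uv; apply/fintype.subsetP => p; rewrite !inE => /andP[-> /le_trans]; apply.
by rewrite ler_wpM2r ?invr_ge0.
Qed.

Lemma pair_corr_lt0 u N : u < 0 -> pair_corr x u N = 0.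
Proof.
move=> u_lt0; rewrite pair_corrE; case: N => [|N]; first by rewrite invr0 mulr0.
rewrite eq_card0 ?mul0r // => p; rewrite !inE; apply/negbTE; rewrite negb_and -ltNge.
by rewrite (lt_le_trans _ (dist_int_ge0 _)) ?orbT // pmulr_llt0 ?invr_gt0.
Qed.

Local Open Scope classical_set_scope.
Local Open Scope ring_scope.

Lemma ppc_window_lt (eta beta u : R) :
  poissonian_pc x -> 0 < eta -> 2 * eta < beta -> 0 <= u ->
  \forall N \near \oo, pair_corr x u N - pair_corr x (u - eta) N < beta.
Proof.
move=> ppc eta_gt0 lt_beta u_ge0; have [lt_u|le_u] := ltP u eta.
  apply: filterS (cvgr_lt _ (ppc u u_ge0) beta _) => [N|]; last lra.
  by rewrite (@pair_corr_lt0 (u - eta)) ?subr0 // subr_lt0.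
have lim : pair_corr x u N - pair_corr x (u - eta) N @[N --> \oo] --> 2 * eta.
  have -> : 2 * eta = 2 * u - 2 * (u - eta) by ring.
  by apply: cvgB; apply: ppc; rewrite ?subr_ge0.
exact: cvgr_lt lim _ lt_beta.
Qed.

Lemma ppc_card_pairs_at_dist_le (C : nat) (T eps : R) :
  poissonian_pc x -> 0 < eps ->
  \forall N \near \oo, forall D : seq R, (size D <= C)%N ->
    (forall d, d \in D -> d * N%:R < T) -> #|pairs_at_dist N D|%:R <= eps * N%:R.
Proof.
move=> ppc eps_gt0; pose beta := eps / C.+1%:R; pose eta := beta / 4.
have beta_gt0 : 0 < beta by rewrite divr_gt0.
have eta_gt0 : 0 < eta by rewrite divr_gt0.
pose n := (Num.truncn (T / eta)).+1.
near=> N => D size_D D_lt.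
have N_gt0 : 0 < N%:R :> R by rewrite ltr0n; near: N; exists 1%N.
have windows : forall k : 'I_n.+1,
    pair_corr x (k%:R * eta) N - pair_corr x (k%:R * eta - eta) N < beta.
  near: N; apply: filter_forall => k; apply: ppc_window_lt => //.
    by rewrite /eta; lra.
  exact: mulr_ge0 (ler0n _ _) (ltW eta_gt0).
(* A pair at distance [d >= 0] is counted by [F_N (k eta) - F_N (k eta - eta)]
   for [k = ceil (d N / eta)], and this difference tends to [2 eta < beta]. *)
pose k d : nat := `|Num.ceil (d * N%:R / eta)|%N.
pose W d := close_pairs N ((k d)%:R * eta) :\: close_pairs N ((k d)%:R * eta - eta).
pose D' := [seq d <- D | 0 <= d].
have cover p : p \in pairs_at_dist N D -> exists2 d, d \in D' & p \in W d.
  rewrite inE => /andP[np dD]; have d_ge0 := dist_int_ge0 (x p.1.+1 - x p.2.+1).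
  exists (dist_int (x p.1.+1 - x p.2.+1)); first by rewrite mem_filter d_ge0.
  set d := dist_int _ in dD d_ge0 *.
  have /andP[] := abs_ceil_itv (divr_ge0 (mulr_ge0 d_ge0 (ltW N_gt0)) (ltW eta_gt0)).
  rewrite -/(k d) ltr_pdivlMr // ler_pdivrMr // mulrBl mul1r => lo hi.
  by rewrite !inE np /= -ltNge ler_pdivlMr // hi andbT ltr_pdivrMr.
have card_W d : d \in D' -> #|W d|%:R <= N%:R * beta.
  rewrite mem_filter => /andP[d_ge0 dD].
  have v_ge0 := divr_ge0 (mulr_ge0 d_ge0 (ltW N_gt0)) (ltW eta_gt0).
  have /andP[lo _] := abs_ceil_itv v_ge0.
  have lt_k : (k d < n.+1)%N.
    rewrite -(ltr_nat R) -natr1; apply: lt_le_trans (_ : d * N%:R / eta + 1 <= _); first lra.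
    by rewrite lerD2r ltW // (lt_trans _ (truncnS_gt _)) // ltr_pM2r ?invr_gt0 ?D_lt.
  have le_win : (k d)%:R * eta - eta <= (k d)%:R * eta by lra.
  have := windows (Ordinal lt_k); rewrite !pair_corrE /= -mulrBl ltr_pdivrMr // => lt_beta.
  rewrite cardsDS ?close_pairsS // natrB ?subset_leq_card ?close_pairsS //.
  by rewrite [N%:R * _]mulrC ltW.
have := card_le_sum_cover cover; rewrite -(ler_nat R) natr_sum => /le_trans; apply.
apply: le_trans (_ : \sum_(d <- D') N%:R * beta <= _).
  by rewrite big_seq [X in _ <= X]big_seq; apply: ler_sum.
have size_beta : (size D')%:R * beta <= eps.
  rewrite /beta mulrA ler_pdivrMr ?ltr0Sn // mulrC ler_pM2l // ler_nat.
  by rewrite size_filter (leq_trans (count_size _ _)) // leqW.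
rewrite big_const_seq count_predT iter_addr addr0 -[_ *+ size D']mulr_natr -mulrA.
by rewrite [eps * _]mulrC ler_wpM2l ?ler0n // mulrC.
Unshelve. all: by end_near.
Qed.

End PairCorrelation.

Lemma card_pairs_at_gap_sums_ge {R : realType} (x : nat -> R) (N H : nat) (J : {set 'I_N})
    (P G : seq R) (K t : R) :
  0 < K -> 0 < t -> 2 * t ^+ 2 < N%:R -> t ^+ 2 * K <= H%:R ->
  (size P)%:R <= K * N%:R -> (forall p, p \in P -> 0 <= p /\ p < 1) ->
  (forall j : 'I_N, j \in J -> x j.+1 \in P) -> (forall d, is_gap P d -> d \in G) ->
  (2 * t - 1) * #|J|%:R - (2 * N%:R + t ^+ 2) <=
  #|pairs_at_dist x N [seq d <- sums_upto G H | d * N%:R < t ^+ 2]|%:R.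
Proof.
move=> K_gt0 t_gt0 N_large le_H size_P P01 xJ hG.
have t2_gt0 : 0 < t ^+ 2 by rewrite exprn_gt0.
have N_gt0 : 0 < N%:R :> R by lra.
pose delta := t ^+ 2 / N%:R; have delta_gt0 : 0 < delta by rewrite divr_gt0.
pose c := K * N%:R; have c_gt0 : 0 < c by rewrite mulr_gt0.
pose w (j : 'I_N) := weight P c (x j.+1).
have w_itv j : j \in J -> 0 <= w j < 2.
  by move=> jJ; apply: weight_itv => //; apply/andP; exact: P01 (xJ j jJ).
pose Q := (Num.truncn (2 / delta)).+1.
pose key (j : 'I_N) : 'I_Q := inord (Num.truncn (w j / delta)).
have keyE j : j \in J -> key j = Num.truncn (w j / delta) :> nat.
  move=> jJ; have /andP[w_ge0 w_lt2] := w_itv j jJ.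
  by rewrite inordK // ltnS le_truncn // ler_wpM2r ?invr_ge0 ?ltW.
have same_key_close :
    [set p | [&& p.1 \in J, p.2 \in J, p.1 != p.2 & key p.1 == key p.2]] \subset
    pairs_at_dist x N [seq d <- sums_upto G H | d * N%:R < t ^+ 2].
  apply/fintype.subsetP => -[i j]; rewrite !inE /= => /and4P[iJ jJ nij /eqP kij].
  have /andP[wi_ge0 _] := w_itv i iJ; have /andP[wj_ge0 _] := w_itv j jJ.
  have := dist_lt_of_eq_truncn delta_gt0 wi_ge0 wj_ge0; rewrite -!keyE // kij.
  have delta_c : delta * c <= H%:R.
    by rewrite (_ : delta * c = t ^+ 2 * K) // /delta /c; field; rewrite gt_eqF.
  move=> /(_ erefl) /(gap_sum_of_close_weights hG c_gt0 delta_c (xJ i iJ) (xJ j jJ)).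
  move=> [lt_delta sums_d]; rewrite nij dist_int_small; last first.
    by rewrite ltW // (lt_le_trans lt_delta) // /delta ler_pdivrMr //; lra.
  by rewrite mem_filter sums_d andbT -ltr_pdivlMr.
have Q_le : t ^+ 2 * Q%:R <= 2 * N%:R + t ^+ 2.
  have : Q%:R <= 2 / delta + 1 by rewrite /Q -natr1 lerD2r truncn_le divr_ge0 // ltW.
  move=> /(ler_wpM2l (ltW t2_gt0)) /le_trans; apply; rewrite le_eqVlt; apply/orP; left.
  by apply/eqP; rewrite /delta; field; rewrite !gt_eqF.
have := card_offdiag_same_key_ge J key t; rewrite card_ord.
have := subset_leq_card same_key_close; rewrite -(ler_nat R).
lra.
Qed.

Theorem theorem1 (R : realType) (x : nat -> R)
  (hx : forall n : nat, (1 <= n)%N -> 0 <= x n /\ x n < 1)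
  (hyp : exists (s : nat) (K gamma : R), 0 < K /\ 0 < gamma /\
     forall N0 : nat, exists N : nat, (N0 <= N)%N /\
       exists (J : {set 'I_N}) (P : seq R),
         gamma * N%:R <= (#|J|)%:R /\
         [/\ uniq P,
             (size P)%:R <= K * N%:R,
             (forall p, p \in P -> 0 <= p /\ p < 1),
             (forall j : 'I_N, j \in J -> x j.+1 \in P) &
             at_most_gaps P s]) :
  ~ poissonian_pc x.
Proof.
move=> ppc; case: hyp => s [K [gamma [K_gt0 [gamma_gt0 hyp]]]].
pose t := 2 / gamma + 1; have t_ge1 : 1 <= t by rewrite lerDr divr_ge0 // ltW.
pose H := (Num.truncn (t ^+ 2 * K)).+1.
have le_H : t ^+ 2 * K <= H%:R by exact/ltW/truncnS_gt.
have half_gt0 : 0 < 1 / 2 :> R by lra.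
have [N1 _ few] := ppc_card_pairs_at_dist_le (s.+1 ^ H) (t ^+ 2) ppc half_gt0.
have [N [N_ge [J [P [J_large [_ size_P P01 xJ [G [size_G hG]]]]]]]] :=
  hyp (maxn N1 (Num.truncn (2 * t ^+ 2)).+1).
have t2_ge0 : 0 <= t ^+ 2 := sqr_ge0 t.
rewrite geq_max (truncn_lt_nat _ (mulr_ge0 (ler0n R 2) t2_ge0)) in N_ge.
case/andP: N_ge => N1N N_gt.
pose D := [seq d <- sums_upto G H | d * N%:R < t ^+ 2].
have size_D : (size D <= s.+1 ^ H)%N.
  by rewrite size_filter (leq_trans (count_size _ _)) // size_sums_upto leq_exp2r.
have D_lt d : d \in D -> d * N%:R < t ^+ 2 by rewrite mem_filter => /andP[].
have upper := few N N1N D size_D D_lt.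
have lower := card_pairs_at_gap_sums_ge K_gt0 (lt_le_trans ltr01 t_ge1) N_gt le_H
  size_P P01 xJ hG.
have coef_ge0 : 0 <= 2 * t - 1 by lra.
have := ler_wpM2l coef_ge0 J_large; rewrite mulrA.
have -> : (2 * t - 1) * gamma = 4 + gamma by rewrite /t; field; rewrite gt_eqF.
have : 0 < gamma * N%:R.
  by rewrite mulr_gt0 //; apply: le_lt_trans N_gt; rewrite mulr_ge0.
lra.
Qed.
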